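(* Let $0 \le \alpha \le \beta < \infty$, let $\varphi\colon \mathbb{R} \to \mathbb{R}$ satisfy $\alpha \le \frac{\varphi(a) - \varphi(b)}{a - b} \le \beta$ for all $a \ne b$, and let $\phi\colon \mathbb{R}^{n_1}\to\mathbb{R}^{n_1}$ act componentwise by $\varphi$. Let $H \in \mathbb{R}^{m \times n_0}$, $G \in \mathbb{R}^{m \times n_1}$, $W \in \mathbb{R}^{n_1 \times n_0}$ and $h(x) = Hx + G\phi(Wx)$. Suppose $T \in \mathbb{R}^{n_1 \times n_1}$ is diagonal and satisfies $G^\top G \preceq T$. Then for all $x, x' \in \mathbb{R}^{n_0}$, $$\|h(x) - h(x')\|_2 \le \Big(\Big\|H + \frac{\alpha+\beta}{2} G W\Big\|_2 + \frac{\beta - \alpha}{2}\,\|W^\top T W\|_2^{1/2}\Big)\|x - x'\|_2.$$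
   Context: $\|A\|_2$ denotes the spectral norm (largest singular value) of a matrix $A$; $\preceq$ is the Loewner order on symmetric matrices. *)

From HB Require Import structures.
From mathcomp Require Import all_boot all_order all_algebra.
From mathcomp Require Import boolp classical_sets reals.
Set Implicit Arguments. Unset Strict Implicit. Unset Printing Implicit Defensive.
Import Order.TTheory GRing.Theory Num.Theory.
Local Open Scope ring_scope.
Local Open Scope classical_set_scope.

Definition vnorm2 (R : realType) (n : nat) (x : 'cV[R]_n) : R :=
  Num.sqrt (\sum_(i < n) x i 0 ^+ 2).

(* Largest eigenvalue of a (symmetric) square matrix; the sup of the
   (finite) set of its real eigenvalues (0 for the empty 0x0 matrix). *)
Definition lambda_max (R : realType) (n : nat) (S : 'M[R]_n) : R :=
  sup [set a : R | eigenvalue S a].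

Definition specnorm (R : realType) (m n : nat) (A : 'M[R]_(m, n)) : R :=
  Num.sqrt (lambda_max (A^T *m A)).

Definition loewner_le (R : realType) (n : nat) (A B : 'M[R]_n) : Prop :=
  A^T = A /\ B^T = B /\
  forall v : 'cV[R]_n, 0 <= (v^T *m (B - A) *m v) 0 0.

Definition compwise (R : realType) (n : nat) (f : R -> R) (v : 'cV[R]_n) : 'cV[R]_n :=
  map_mx f v.

(* With d = x - x', y = W d and c = (alpha + beta) / 2, the difference h x - h x'
   splits as (H + c G W) d + G r with r = phi (W x) - phi (W x') - c y.  The slope
   condition gives |r_i| <= (beta - alpha) / 2 |y_i|; as T is diagonal with
   nonnegative entries and dominates G'G, |G r|^2 <= r'Tr <= ((beta - alpha) / 2)^2 y'Ty,
   and y'Ty = d'(W'TW)d.  Spectral norms enter through the Rayleigh bound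
   v'Sv <= lambda_max S |v|^2 for symmetric S: the supremum mu of the Rayleigh
   quotient is an eigenvalue, since mu I - S is positive semidefinite with
   quadratic form arbitrarily small on unit vectors, hence singular. *)

From HB Require Import structures.
From mathcomp Require Import all_boot all_order all_algebra.
From mathcomp Require Import boolp classical_sets reals.
From mathcomp Require Import ring lra.
Import Order.TTheory GRing.Theory Num.Theory.
Local Open Scope ring_scope.

Section DotProduct.
Set Implicit Arguments. Unset Strict Implicit. Unset Printing Implicit Defensive.
Variable R : realFieldType.

Definition dotv n (u v : 'cV[R]_n) : R := \sum_i u i 0 * v i 0.

Lemma dotvC n (u v : 'cV[R]_n) : dotv u v = dotv v u.
Proof. by apply: eq_bigr => i _; rewrite mulrC. Qed.

Lemma dotvDl n (u w v : 'cV[R]_n) : dotv (u + w) v = dotv u v + dotv w v.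
Proof. by rewrite /dotv -big_split; apply: eq_bigr => i _; rewrite mxE mulrDl. Qed.

Lemma dotvZl n a (u v : 'cV[R]_n) : dotv (a *: u) v = a * dotv u v.
Proof. by rewrite /dotv mulr_sumr; apply: eq_bigr => i _; rewrite mxE mulrA. Qed.

Lemma dotvNl n (u v : 'cV[R]_n) : dotv (- u) v = - dotv u v.
Proof. by rewrite -scaleN1r dotvZl mulN1r. Qed.

Lemma dotvDr n (u w v : 'cV[R]_n) : dotv v (u + w) = dotv v u + dotv v w.
Proof. by rewrite !(dotvC v) dotvDl. Qed.

Lemma dotvZr n a (u v : 'cV[R]_n) : dotv v (a *: u) = a * dotv v u.
Proof. by rewrite !(dotvC v) dotvZl. Qed.

Lemma dotvNr n (u v : 'cV[R]_n) : dotv v (- u) = - dotv v u.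
Proof. by rewrite !(dotvC v) dotvNl. Qed.

Lemma dotv0r n (v : 'cV[R]_n) : dotv v 0 = 0.
Proof. by rewrite /dotv big1 // => i _; rewrite mxE mulr0. Qed.

Lemma dotv_delta n (i : 'I_n) v : dotv (delta_mx i 0) v = v i 0.
Proof.
rewrite /dotv (bigD1 i) //= big1 => [|j ji]; first by rewrite mxE !eqxx mul1r addr0.
by rewrite mxE (negbTE ji) mul0r.
Qed.

Lemma dotv_ge0 n (u : 'cV[R]_n) : 0 <= dotv u u.
Proof. by apply: sumr_ge0 => i _; rewrite -expr2 sqr_ge0. Qed.

Lemma dotv_eq0 n (u : 'cV[R]_n) : dotv u u = 0 -> u = 0.
Proof.
move=> /eqP; rewrite psumr_eq0 => [/allP u0|i _]; last by rewrite -expr2 sqr_ge0.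
apply/matrixP => i j; rewrite (ord1 j) mxE.
by have := u0 i (mem_index_enum _); rewrite -expr2 sqrf_eq0 => /eqP.
Qed.

Lemma dotv_mulmx n m (A : 'M[R]_(n, m)) u v : dotv u (A *m v) = dotv (A^T *m u) v.
Proof.
rewrite /dotv; under eq_bigr => i _ do rewrite mxE mulr_sumr.
rewrite exchange_big /=; apply: eq_bigr => j _.
by rewrite mxE mulr_suml; apply: eq_bigr => i _; rewrite mxE; ring.
Qed.

Lemma dotv_trmx_mulmx m n (G : 'M[R]_(m, n)) v :
  dotv v (G^T *m G *m v) = dotv (G *m v) (G *m v).
Proof. by rewrite -mulmxA dotv_mulmx trmxK. Qed.

Lemma quad_nonneg_discr (a b c : R) : 0 <= c ->
  (forall t, 0 <= a + 2 * b * t + c * t ^+ 2) -> b ^+ 2 <= a * c.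
Proof.
move=> c_ge0 quad_ge0; have [c0|c_neq0] := eqVneq c 0.
  have [b0|b_neq0] := eqVneq b 0; first by rewrite b0 c0; lra.
  have := quad_ge0 (- (a + 1) / (2 * b)); rewrite c0 mul0r addr0.
  have -> : 2 * b * (- (a + 1) / (2 * b)) = - (a + 1) by field.
  lra.
have c_gt0 : 0 < c by rewrite lt_neqAle eq_sym c_neq0.
have := quad_ge0 (- b / c).
have -> : a + 2 * b * (- b / c) + c * (- b / c) ^+ 2 = (a * c - b ^+ 2) / c by field.
by rewrite pmulr_lge0 ?invr_gt0 // subr_ge0.
Qed.

Lemma psd_cauchy_schwarz n (M : 'M[R]_n) u w : M^T = M ->
  (forall v, 0 <= dotv v (M *m v)) ->
  dotv u (M *m w) ^+ 2 <= dotv u (M *m u) * dotv w (M *m w).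
Proof.
move=> M_sym M_psd; apply: quad_nonneg_discr => [|t]; first exact: M_psd.
have := M_psd (u + t *: w).
rewrite mulmxDr -scalemxAr !dotvDl !dotvDr !dotvZl !dotvZr.
have -> : dotv w (M *m u) = dotv u (M *m w) by rewrite dotv_mulmx M_sym dotvC.
move=> uw_ge0.
by apply: le_trans uw_ge0 _; rewrite le_eqVlt; apply/orP; left; apply/eqP; ring.
Qed.

Lemma cauchy_schwarz n (u w : 'cV[R]_n) : dotv u w ^+ 2 <= dotv u u * dotv w w.
Proof.
have := @psd_cauchy_schwarz n 1%:M u w (tr_scalar_mx _ _).
by rewrite !mul1mx; apply=> v; rewrite mul1mx dotv_ge0.
Qed.

Lemma dotv_amgm n (u v : 'cV[R]_n) : 2 * dotv u v <= dotv u u + dotv v v.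
Proof.
have := dotv_ge0 (u - v).
by rewrite dotvDl !dotvDr !dotvNl !dotvNr (dotvC v u); lra.
Qed.

Lemma mulmx_dotv_bounded p q (A : 'M[R]_(p, q)) :
  exists2 K, 0 <= K & forall v, dotv (A *m v) (A *m v) <= K * dotv v v.
Proof.
exists (\sum_i dotv (row i A)^T (row i A)^T) => [|v].
  by apply: sumr_ge0 => i _; apply: dotv_ge0.
rewrite mulr_suml; apply: ler_sum => i _.
have -> : (A *m v) i 0 = dotv (row i A)^T v.
  by rewrite mxE; apply: eq_bigr => j _; rewrite !mxE.
by rewrite -expr2; apply: cauchy_schwarz.
Qed.

Lemma quadform_bounded n (A : 'M[R]_n) :
  exists2 B, 0 <= B & forall w, dotv w (A *m w) <= B * dotv w w.
Proof.
have [K K_ge0 AK] := mulmx_dotv_bounded A.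
exists ((1 + K) / 2) => [|w]; first lra.
have := dotv_amgm w (A *m w); have := AK w; lra.
Qed.

Lemma psd_gram_le_quadform n (M : 'M[R]_n) : M^T = M ->
  (forall v, 0 <= dotv v (M *m v)) ->
  exists2 B, 0 <= B & forall u, dotv (M *m u) (M *m u) <= B * dotv u (M *m u).
Proof.
move=> M_sym M_psd; have [B B_ge0 MB] := quadform_bounded M.
exists B => // u; set w := M *m u.
have cs : dotv w w ^+ 2 <= dotv w (M *m w) * dotv u w.
  exact: psd_cauchy_schwarz w u M_sym M_psd.
have sq_le : dotv w w * dotv w w <= B * dotv u w * dotv w w.
  by rewrite -expr2 (le_trans cs) // mulrAC ler_wpM2r ?M_psd ?MB.
have [w_gt0|w_le0] := ltrP 0 (dotv w w); first by rewrite -(ler_pM2r w_gt0).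
by apply: le_trans w_le0 _; rewrite mulr_ge0 ?M_psd.
Qed.

(* If [M] were invertible, [u = M^-1 (M u)] and [|M u|^2 <= B u'Mu] would keep
   [u'Mu] away from 0 on unit vectors. *)
Lemma psd_not_unitmx n (M : 'M[R]_n) : M^T = M ->
  (forall v, 0 <= dotv v (M *m v)) ->
  (forall eps, 0 < eps -> exists2 u, dotv u u = 1 & dotv u (M *m u) < eps) ->
  M \notin unitmx.
Proof.
move=> M_sym M_psd small; apply/negP => M_unit.
have [K K_ge0 invK] := mulmx_dotv_bounded (invmx M).
have [B B_ge0 gramB] := psd_gram_le_quadform M_sym M_psd.
have KB_ge0 : 0 <= K * B by rewrite mulr_ge0.
have eps_gt0 : 0 < (K * B + 1)^-1 by rewrite invr_gt0; lra.
have [u u1 q_small] := small _ eps_gt0.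
have q_ge0 := M_psd u.
have one_le : 1 <= K * B * dotv u (M *m u).
  have := invK (M *m u); rewrite mulKmx // u1 => /le_trans; apply.
  by rewrite -mulrA ler_wpM2l.
move: q_small; rewrite -[_^-1]div1r ltr_pdivlMr; last lra.
by nra.
Qed.

End DotProduct.

Lemma unit_rescale (R : realType) n (A : 'M[R]_n) v : 0 < dotv v v ->
  exists2 w, dotv w w = 1 & dotv v (A *m v) = dotv w (A *m w) * dotv v v.
Proof.
move=> v_gt0; have v_neq0 : dotv v v != 0 by rewrite gt_eqF.
exists ((Num.sqrt (dotv v v))^-1 *: v); rewrite -?scalemxAr !dotvZl !dotvZr mulrA.
  by rewrite -expr2 exprVn sqr_sqrtr ?ltW // mulVf.
by rewrite -expr2 exprVn sqr_sqrtr ?ltW // mulrAC mulVf ?mul1r.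
Qed.

Section Rayleigh.
Set Implicit Arguments. Unset Strict Implicit. Unset Printing Implicit Defensive.
Local Open Scope classical_set_scope.
Variables (R : realType) (n : nat) (S : 'M[R]_n.+1).
Hypothesis S_sym : S^T = S.

Definition rayleigh_set : set R :=
  [set dotv v (S *m v) | v in [set v | dotv v v = 1]].

Lemma has_sup_rayleigh : has_sup rayleigh_set.
Proof.
have [B _ SB] := quadform_bounded S.
split; first by exists (dotv (delta_mx 0 0) (S *m delta_mx 0 0)), (delta_mx 0 0);
  rewrite //= dotv_delta mxE !eqxx.
by exists B => _ [v /= v1 <-]; rewrite -[B]mulr1 -v1 SB.
Qed.

Lemma rayleigh_ub v : dotv v (S *m v) <= sup rayleigh_set * dotv v v.
Proof.
have [v_gt0|v_le0] := ltrP 0 (dotv v v); last first.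
  have /dotv_eq0 -> : dotv v v = 0 by apply/eqP; rewrite eq_le v_le0 dotv_ge0.
  by rewrite mulmx0 !dotv0r mulr0.
have [w w1 ->] := unit_rescale S v_gt0.
by rewrite ler_wpM2r ?dotv_ge0 //; apply: sup_upper_bound has_sup_rayleigh _ _; exists w.
Qed.

Lemma eigenvalue_rayleigh_sup : eigenvalue S (sup rayleigh_set).
Proof.
set mu := sup _; set M := mu%:M - S.
have M_sym : M^T = M by rewrite /M linearB /= tr_scalar_mx S_sym.
have M_form v : dotv v (M *m v) = mu * dotv v v - dotv v (S *m v).
  by rewrite mulmxBl mul_scalar_mx dotvDr dotvNr dotvZr.
have M_psd v : 0 <= dotv v (M *m v) by rewrite M_form subr_ge0 rayleigh_ub.
have : M \notin unitmx.
  apply: psd_not_unitmx => // eps eps_gt0.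
  have [_ [u /= u1 <-] close] := sup_adherent eps_gt0 has_sup_rayleigh.
  by exists u; rewrite // M_form u1 mulr1 ltrBlDr addrC -ltrBlDr.
rewrite /eigenvalue /eigenspace kermx_eq0 row_free_unit.
have -> : S - mu%:M = (-1) *: M by rewrite scaleN1r opprB.
by rewrite unitmxZ // unitrN1.
Qed.

Lemma eigenvalue_le_rayleigh_sup a : eigenvalue S a -> a <= sup rayleigh_set.
Proof.
move=> /eigenvalueP [x x_eig x_neq0]; set u := x^T.
have Su : S *m u = a *: u by rewrite /u -{1}S_sym -trmx_mul x_eig linearZ.
have u_gt0 : 0 < dotv u u.
  rewrite lt_neqAle eq_sym dotv_ge0 andbT; apply/negP => /eqP /dotv_eq0 u0.
  by move: x_neq0; rewrite -(trmxK x) -/u u0 linear0 eqxx.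
by have := rayleigh_ub u; rewrite Su dotvZr ler_pM2r.
Qed.

Lemma lambda_max_rayleigh : lambda_max S = sup rayleigh_set.
Proof.
have eig := eigenvalue_rayleigh_sup.
apply/le_anti/andP; split.
  by apply: ge_sup; [exists (sup rayleigh_set) | move=> a /eigenvalue_le_rayleigh_sup].
apply: sup_upper_bound => //; split; first by exists (sup rayleigh_set).
by exists (sup rayleigh_set) => a /eigenvalue_le_rayleigh_sup.
Qed.

End Rayleigh.

Lemma quadform_le_lambda_max (R : realType) n (S : 'M[R]_n) v : S^T = S ->
  dotv v (S *m v) <= lambda_max S * dotv v v.
Proof.
case: n S v => [|n] S v S_sym; first by rewrite /dotv !big_ord0 mulr0.
by rewrite lambda_max_rayleigh //; apply: rayleigh_ub.
Qed.

Lemma ler_sqrtM_of_sqr (R : rcfType) (x b c : R) : 0 <= c ->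
  x ^+ 2 <= b * c ^+ 2 -> x <= Num.sqrt b * c.
Proof.
move=> c_ge0 x_le.
have -> : Num.sqrt b * c = Num.sqrt (c ^+ 2 * b).
  by rewrite sqrtrM ?sqr_ge0 // sqrtr_sqr ger0_norm // mulrC.
by apply: le_trans (ler_norm x) _; rewrite -sqrtr_sqr ler_wsqrtr // mulrC.
Qed.

Section EuclideanNorm.
Set Implicit Arguments. Unset Strict Implicit. Unset Printing Implicit Defensive.
Variable R : realType.

Lemma vnorm2E n (x : 'cV[R]_n) : vnorm2 x = Num.sqrt (dotv x x).
Proof. by rewrite /vnorm2; congr Num.sqrt; apply: eq_bigr => i _; rewrite expr2. Qed.

Lemma vnorm2_ge0 n (x : 'cV[R]_n) : 0 <= vnorm2 x.
Proof. by rewrite vnorm2E sqrtr_ge0. Qed.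

Lemma vnorm2_sqr n (x : 'cV[R]_n) : vnorm2 x ^+ 2 = dotv x x.
Proof. by rewrite vnorm2E sqr_sqrtr // dotv_ge0. Qed.

Lemma dotv_le_vnorm2 n (u w : 'cV[R]_n) : dotv u w <= vnorm2 u * vnorm2 w.
Proof.
rewrite [vnorm2 u]vnorm2E; apply: ler_sqrtM_of_sqr; first exact: vnorm2_ge0.
by rewrite vnorm2_sqr cauchy_schwarz.
Qed.

Lemma ler_vnorm2D n (u w : 'cV[R]_n) : vnorm2 (u + w) <= vnorm2 u + vnorm2 w.
Proof.
rewrite -[_ + _ in X in _ <= X]mul1r -sqrtr1; apply: ler_sqrtM_of_sqr.
  by rewrite addr_ge0 ?vnorm2_ge0.
rewrite mul1r vnorm2_sqr dotvDl !dotvDr (dotvC w u) sqrrD -!vnorm2_sqr.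
by have := dotv_le_vnorm2 u w; lra.
Qed.

Lemma vnorm2_mulmx_le m n (A : 'M[R]_(m, n)) v : vnorm2 (A *m v) <= specnorm A * vnorm2 v.
Proof.
apply: ler_sqrtM_of_sqr; first exact: vnorm2_ge0.
rewrite !vnorm2_sqr -dotv_trmx_mulmx; apply: quadform_le_lambda_max.
by rewrite trmx_mul trmxK.
Qed.

Lemma quadform_le_specnorm n (S : 'M[R]_n) v : dotv v (S *m v) <= specnorm S * dotv v v.
Proof.
apply: le_trans (dotv_le_vnorm2 _ _) _.
rewrite -vnorm2_sqr expr2 mulrCA ler_wpM2l ?vnorm2_ge0 //.
exact: vnorm2_mulmx_le.
Qed.

End EuclideanNorm.

Lemma loewner_quadform (R : realType) n (A B : 'M[R]_n) v : loewner_le A B ->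
  dotv v (A *m v) <= dotv v (B *m v).
Proof.
move=> [_ [_ /(_ v)]]; rewrite -mulmxA mxE mulmxBl.
rewrite (_ : \sum_j _ = dotv v (B *m v - A *m v)); last by apply: eq_bigr => i _; rewrite mxE.
by rewrite dotvDr dotvNr subr_ge0.
Qed.

Lemma quadform_diag (R : realFieldType) n (T : 'M[R]_n) v : is_diag_mx T ->
  dotv v (T *m v) = \sum_i T i i * v i 0 ^+ 2.
Proof.
move=> /is_diag_mxP T_diag; apply: eq_bigr => i _.
rewrite mxE (bigD1 i) //= big1 ?addr0; first by rewrite expr2; ring.
by move=> j ji; rewrite T_diag ?mul0r // eq_sym.
Qed.

Lemma loewner_gram_diag_ge0 (R : realType) m n (G : 'M[R]_(m, n)) T i :
  loewner_le (G^T *m G) T -> 0 <= T i i.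
Proof.
move=> /(loewner_quadform (delta_mx i 0)); rewrite dotv_trmx_mulmx dotv_delta.
rewrite mxE (bigD1 i) //= big1 ?addr0 => [|j ji]; last by rewrite mxE (negbTE ji) mulr0.
by rewrite mxE !eqxx mulr1; apply: le_trans (dotv_ge0 _).
Qed.

Lemma diag_quadform_le (R : realFieldType) n (T : 'M[R]_n) (r y : 'cV[R]_n) k :
  is_diag_mx T -> (forall i, 0 <= T i i) ->
  (forall i, r i 0 ^+ 2 <= k * y i 0 ^+ 2) ->
  dotv r (T *m r) <= k * dotv y (T *m y).
Proof.
move=> T_diag T_ge0 ry; rewrite !quadform_diag // mulr_sumr; apply: ler_sum => i _.
by rewrite [leRHS]mulrCA; apply: ler_wpM2l.
Qed.

Lemma gram_residual_le (R : realType) m n0 n1 (G : 'M[R]_(m, n1))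
    (T : 'M[R]_n1) (W : 'M[R]_(n1, n0)) (r : 'cV[R]_n1) (d : 'cV[R]_n0) k :
  is_diag_mx T -> loewner_le (G^T *m G) T -> 0 <= k ->
  (forall i, r i 0 ^+ 2 <= k * (W *m d) i 0 ^+ 2) ->
  vnorm2 (G *m r) <= Num.sqrt k * Num.sqrt (specnorm (W^T *m T *m W)) * vnorm2 d.
Proof.
move=> T_diag GT k_ge0 rWd; rewrite -sqrtrM //.
apply: ler_sqrtM_of_sqr; first exact: vnorm2_ge0.
rewrite !vnorm2_sqr -dotv_trmx_mulmx; apply: le_trans (loewner_quadform r GT) _.
apply: le_trans (diag_quadform_le T_diag (fun i => loewner_gram_diag_ge0 i GT) rWd) _.
rewrite -mulrA ler_wpM2l // dotvC dotv_mulmx dotvC !mulmxA.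
exact: quadform_le_specnorm.
Qed.

Lemma slope_residual_sqr_le (R : realFieldType) (f : R -> R) (alpha beta a b : R) :
  (a != b -> alpha <= (f a - f b) / (a - b) <= beta) ->
  (f a - f b - (alpha + beta) / 2 * (a - b)) ^+ 2
    <= ((beta - alpha) / 2) ^+ 2 * (a - b) ^+ 2.
Proof.
have [<-|a_neq_b] := eqVneq a b; first by rewrite !subrr mulr0 subr0 expr0n /= mulr0.
case/(_ isT)/andP; set s := (f a - f b) / (a - b) => alpha_le beta_ge.
have -> : f a - f b = s * (a - b) by rewrite /s divfK // subr_eq0.
rewrite -mulrBl exprMn ler_wpM2r ?sqr_ge0 //; nra.
Qed.

Lemma affine_diff_split (R : comNzRingType) m n0 n1 (H : 'M[R]_(m, n0))
    (G : 'M[R]_(m, n1)) (W : 'M[R]_(n1, n0)) (p p' : 'cV[R]_n1) (x x' : 'cV[R]_n0) c :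
  H *m x + G *m p - (H *m x' + G *m p') =
  (H + c *: (G *m W)) *m (x - x') + G *m (p - p' - c *: (W *m (x - x'))).
Proof.
rewrite mulmxDl -scalemxAl !mulmxBr -scalemxAr mulmxBr !mulmxA.
by rewrite -(addrA (_ - _)) (addrCA _ (_ - _)) subrr addr0 opprD addrACA.
Qed.

Theorem mainTheorem5 (R : realType) (m n0 n1 : nat) (alpha beta : R)
  (varphi : R -> R)
  (H : 'M[R]_(m, n0)) (G : 'M[R]_(m, n1)) (W : 'M[R]_(n1, n0))
  (T : 'M[R]_n1) :
  0 <= alpha -> alpha <= beta ->
  (forall a b : R, a != b ->
     alpha <= (varphi a - varphi b) / (a - b) <= beta) ->
  is_diag_mx T ->
  loewner_le (G^T *m G) T ->
  let h := fun x : 'cV[R]_n0 => H *m x + G *m compwise varphi (W *m x) in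
  forall x x' : 'cV[R]_n0,
    vnorm2 (h x - h x') <=
      (specnorm (H + ((alpha + beta) / 2) *: (G *m W))
       + (beta - alpha) / 2 * Num.sqrt (specnorm (W^T *m T *m W)))
      * vnorm2 (x - x').
Proof.
move=> _ alpha_le_beta slope T_diag GT h x x'.
have e_ge0 : 0 <= (beta - alpha) / 2 by lra.
rewrite /h (affine_diff_split _ _ W _ _ _ _ ((alpha + beta) / 2)) [leRHS]mulrDl.
apply: le_trans (ler_vnorm2D _ _) (lerD (vnorm2_mulmx_le _ _) _).
rewrite -[X in X * _ * _]ger0_norm // -sqrtr_sqr.
apply: gram_residual_le => // [|i]; first exact: sqr_ge0.
by rewrite /compwise mulmxBr !mxE; apply: slope_residual_sqr_le; apply: slope.
Qed.
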